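(* Let $X$ be a locally compact Polish space and $B\subseteq X$ dense. Suppose $\succeq$ and $\succeq'$ are complete, continuous, and locally strict binary relations on $X$. If $\succeq\cap(B\times B)\subseteq\succeq'\cap(B\times B)$, then $\succeq=\succeq'$.
   Context: A binary relation $\succeq\subseteq X\times X$ is complete if for all $x,y$, $x\succeq y$ or $y\succeq x$; continuous if it is closed in $X\times X$; locally strict if for all $x\succeq y$ and every neighborhood $V$ of $(x,y)$ in $X\times X$ there is $(x',y')\in V$ with $x'\succ y'$, where $x'\succ y'$ means $x'\succeq y'$ and not $y'\succeq x'$. *)

From mathcomp Require Import all_boot all_algebra.
From mathcomp Require Import all_classical all_reals all_analysis.
Local Open Scope classical_set_scope.

Definition separable_space (T : topologicalType) : Prop :=
  exists S : set T, countable S /\ dense S.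

Definition rel_strict {X : Type} (succeq : set (X * X)) (x y : X) : Prop :=
  succeq (x, y) /\ ~ succeq (y, x).

Definition rel_complete {X : Type} (succeq : set (X * X)) : Prop :=
  forall x y : X, succeq (x, y) \/ succeq (y, x).

Definition rel_continuous {X : topologicalType} (succeq : set (X * X)) : Prop :=
  closed succeq.

Definition rel_locally_strict {X : topologicalType} (succeq : set (X * X)) : Prop :=
  forall x y : X, succeq (x, y) ->
  forall V : set (X * X), nbhs (x, y) V ->
  exists x' y' : X, V (x', y') /\ rel_strict succeq x' y'.

From mathcomp Require Import all_boot all_algebra.
From mathcomp Require Import all_classical all_reals all_analysis.
Set Implicit Arguments.
Unset Strict Implicit.
Unset Printing Implicit Defensive.

Local Open Scope classical_set_scope.

(* Write [x > y] for [~ y >= x], an open condition on [(x, y)] when [>=] is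
   closed.  Local strictness makes every pair with [x >= y] a limit of pairs
   with [x > y], and density of [B] puts every such open set of pairs in the
   closure of its trace on [B * B].  On [B * B], [x > y] implies [x >= y]
   (completeness of [>=]) and hence [x >=' y], while [x >' y] implies
   [x >= y] (completeness of [>=] and the hypothesis).  Closedness then
   extends both inclusions to [X * X]. *)

Lemma dense_setX (T1 T2 : topologicalType) (A1 : set T1) (A2 : set T2) :
  dense A1 -> dense A2 -> dense (A1 `*` A2).
Proof.
move=> dA1 dA2 O [p Op] oO.
have [[N1 N2] /= [N1p N2p] sNO] : nbhs p O by exact: open_nbhs_nbhs.
have [a1 [N1a1 A1a1]] := dA1 _ (ex_intro _ p.1 (nbhs_singleton (nbhs_interior N1p)))
  (@open_interior _ N1).
have [a2 [N2a2 A2a2]] := dA2 _ (ex_intro _ p.2 (nbhs_singleton (nbhs_interior N2p)))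
  (@open_interior _ N2).
by exists (a1, a2); split; [apply: sNO; split; exact: interior_subset|].
Qed.

Lemma closure_openI_dense (T : topologicalType) (D U : set T) :
  dense D -> open U -> closure U `<=` closure (U `&` D).
Proof.
move=> dD oU p clUp N /nbhs_interior Np.
have [q [Uq Nq]] := clUp _ Np.
have [r [[Ur Nr] Dr]] := dD _ (ex_intro _ q (conj Uq Nq)) (openI oU (@open_interior _ N)).
by exists r; split; [|exact: interior_subset].
Qed.

Lemma open_swap_pair_preimage_setC (T : topologicalType) (S : set (T * T)) :
  closed S -> open (swap_pair @^-1` ~` S).
Proof.
move=> cS; apply: open_comp; last exact: closed_openC.
by move=> p _; exact: swap_continuous.
Qed.

Lemma rel_locally_strict_sub_closure (T : topologicalType) (S : set (T * T)) :
  rel_locally_strict S -> S `<=` closure [set p | rel_strict S p.1 p.2].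
Proof.
move=> lS [x y] Sxy V /(lS _ _ Sxy) [x' [y' [Vxy' sxy']]].
by exists (x', y').
Qed.

Lemma rel_sub_of_strict_dense (T : topologicalType) (B : set T)
    (S S' : set (T * T)) :
  dense B -> closed S -> closed S' -> rel_locally_strict S ->
  (swap_pair @^-1` ~` S) `&` (B `*` B) `<=` S' -> S `<=` S'.
Proof.
move=> dB cS cS' lS sBS' p.
have strict_sub : [set p | rel_strict S p.1 p.2] `<=` swap_pair @^-1` ~` S.
  by move=> [x y] [].
move=> /(rel_locally_strict_sub_closure lS) /(closureS strict_sub).
move=> /(closure_openI_dense (dense_setX dB dB) (open_swap_pair_preimage_setC cS)).
by move=> /(closureS sBS'); rewrite -((closure_id S').1 cS').
Qed.

Theorem theorem12 (R : realType) (X : completePseudoMetricType R)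
  (hX : hausdorff_space X) (sepX : separable_space X)
  (lcX : locally_compact [set: X])
  (B : set X) (denseB : dense B)
  (S1 S2 : set (X * X))
  (c1 : rel_complete S1) (k1 : rel_continuous S1) (l1 : rel_locally_strict S1)
  (c2 : rel_complete S2) (k2 : rel_continuous S2) (l2 : rel_locally_strict S2) :
  S1 `&` (B `*` B) `<=` S2 `&` (B `*` B) -> S1 = S2.
Proof.
move=> S12; apply/seteqP; split.
- apply: rel_sub_of_strict_dense denseB k1 k2 l1 _ => -[b b'] [/= nS1b'b Bbb'].
  have S1bb' : S1 (b, b') by case: (c1 b b') => // /nS1b'b.
  by have [] := S12 _ (conj S1bb' Bbb').
- apply: rel_sub_of_strict_dense denseB k2 k1 l2 _ => -[b b'] [/= nS2b'b [Bb Bb']].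
  case: (c1 b b') => // S1b'b.
  by have [] := nS2b'b (S12 _ (conj S1b'b (conj Bb' Bb))).1.
Qed.
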